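(* Let $\alpha\in(0,\pi/2)$ and let $\mathbf X=(X_0,\dots,X_n)$ be a good input whose requests span the interval $[-1,r]$ of the $x$-axis, $0\le r\le 1$. Then the cost of the optimal offline algorithm is $$\mathrm{OPT}(\mathbf X;\alpha)=\begin{cases}\frac12\sqrt{(1+r)^2\cot^2\alpha+(1-r)^2} & \text{if } \alpha\le\pi/4 \text{ or } r\ge\frac{\tan^2\alpha-1}{1+\tan^2\alpha},\\ \cos\alpha & \text{otherwise.}\end{cases}$$
   Context: A drone with half angle-of-view $\alpha\in(0,\pi/2)$ at a point $(t_x,t_y)$, $t_y\ge0$, covers $[t_x-t_y\tan\alpha,t_x+t_y\tan\alpha]$ on the $x$-axis. An input is a sequence $X_0=(0,0),X_1,\dots,X_n$ ($n\ge1$) of points on the $x$-axis, $X_i=(x_i,0)$. A solution is a sequence of positions $P_0=(0,0),P_1,\dots,P_n$ in the closed upper half-plane such that $P_i$ covers $X_0,\dots,X_i$; its cost is $\sum_i|P_iP_{i+1}|$. $\mathrm{OPT}(\mathbf X;\alpha)$ is the minimum cost of a solution (input known in advance). A request $X_{i+1}$ is redundant if $x_{i+1}\in[\min_{j\le i}x_j,\max_{j\le i}x_j]$. An input is good if it has no redundant requests, $\min_j x_j=-1$ and $\max_j x_j\in[0,1]$. *)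

From Stdlib Require Import Reals Lra.
Open Scope R_scope.

Definition point := (R * R)%type.

Definition dist (P Q : point) : R :=
  sqrt ((fst P - fst Q)^2 + (snd P - snd Q)^2).

(* A drone with half angle-of-view alpha at P = (t_x, t_y), t_y >= 0, covers
   [t_x - t_y tan alpha, t_x + t_y tan alpha] on the x-axis. *)
Definition covers (alpha : R) (P : point) (x : R) : Prop :=
  fst P - snd P * tan alpha <= x <= fst P + snd P * tan alpha.

(* An input: n >= 1 and x : nat -> R with x 0 = 0; request X_i = (x i, 0),
   for i = 0..n (values of x beyond n are irrelevant). *)
Definition is_input (n : nat) (x : nat -> R) : Prop :=
  (1 <= n)%nat /\ x 0%nat = 0.

Definition is_solution (alpha : R) (n : nat) (x : nat -> R) (P : nat -> point) : Prop :=
  P 0%nat = (0, 0) /\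
  (forall i, (i <= n)%nat -> 0 <= snd (P i)) /\
  (forall i j, (j <= i <= n)%nat -> covers alpha (P i) (x j)).

Fixpoint cost (P : nat -> point) (n : nat) : R :=
  match n with
  | O => 0
  | S m => cost P m + dist (P m) (P (S m))
  end.

Definition OPT_is (alpha : R) (n : nat) (x : nat -> R) (v : R) : Prop :=
  (exists P, is_solution alpha n x P /\ cost P n = v) /\
  (forall P, is_solution alpha n x P -> v <= cost P n).

Definition redundant (x : nat -> R) (i : nat) : Prop :=
  (exists j, (j <= i)%nat /\ x j <= x (S i)) /\
  (exists j, (j <= i)%nat /\ x (S i) <= x j).

Definition is_min_req (n : nat) (x : nat -> R) (m : R) : Prop :=
  (exists j, (j <= n)%nat /\ x j = m) /\ (forall j, (j <= n)%nat -> m <= x j).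
Definition is_max_req (n : nat) (x : nat -> R) (M : R) : Prop :=
  (exists j, (j <= n)%nat /\ x j = M) /\ (forall j, (j <= n)%nat -> x j <= M).

Definition good_input_span (n : nat) (x : nat -> R) (r : R) : Prop :=
  is_input n x /\
  (forall i, (i < n)%nat -> ~ redundant x i) /\
  is_min_req n x (-1) /\ is_max_req n x r /\ 0 <= r <= 1.

(** The drone must end at a point [P_n] of the upper half-plane covering both
    extreme requests [-1] and [r], and by the triangle inequality every solution
    costs at least [|P_0 P_n|]; conversely, flying straight to the point of that
    region nearest to the origin and staying there is a solution.  The region is
    the wedge above the apex [((r - 1)/2, (1 + r)/(2 tan alpha))] bounded by the
    lines [u - v tan alpha = -1] and [u + v tan alpha = r].  Its point nearest to
    the origin is the foot of the perpendicular to the first line, at distance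
    [cos alpha], when that foot lies in the wedge, i.e. when
    [tan^2 alpha (1 - r) >= 1 + r]; otherwise it is the apex. *)

From Stdlib Require Import Reals Lra Lia.
From Stdlib Require Rgeom.
Open Scope R_scope.

Lemma dist_triangle (A B C : point) : dist A B <= dist A C + dist C B.
Proof.
  destruct A as [a1 a2], B as [b1 b2], C as [c1 c2].
  unfold dist; cbn [fst snd]; rewrite <- !Rsqr_pow2.
  exact (Rgeom.triangle a1 a2 b1 b2 c1 c2).
Qed.

Lemma dist_self (A : point) : dist A A = 0.
Proof.
  unfold dist; rewrite !Rminus_diag; simpl; rewrite Rmult_0_l, Rplus_0_l.
  exact sqrt_0.
Qed.

Lemma dist_le_cost (P : nat -> point) (n : nat) : dist (P 0%nat) (P n) <= cost P n.
Proof.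
  induction n as [|n IH]; simpl.
  - rewrite dist_self; lra.
  - pose proof (dist_triangle (P 0%nat) (P (S n)) (P n)); lra.
Qed.

Lemma cost_jump (P : nat -> point) (Q : point) (n : nat) :
  (1 <= n)%nat -> (forall i, (1 <= i)%nat -> P i = Q) -> cost P n = dist (P 0%nat) Q.
Proof.
  intros Hn HP; induction n as [|[|n] IH]; [lia| |]; simpl.
  - rewrite (HP 1%nat) by lia; ring.
  - simpl in IH; rewrite IH, (HP (S n)), (HP (S (S n))), dist_self by lia; ring.
Qed.

Definition covers_span (alpha r : R) (Q : point) : Prop :=
  0 <= snd Q /\ covers alpha Q (-1) /\ covers alpha Q r.

Definition jump (Q : point) (i : nat) : point :=
  match i with O => (0, 0) | S _ => Q end.

Section Reduction.

Variables (alpha : R) (n : nat) (x : nat -> R) (r : R).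
Hypothesis good : good_input_span n x r.

Lemma jump_is_solution (Q : point) : covers_span alpha r Q -> is_solution alpha n x (jump Q).
Proof.
  destruct good as [[_ x0] (_ & [_ min_le] & [_ le_max] & _)].
  intros (Qpos & Qmin & Qmax); split; [reflexivity|split].
  - intros [|i] _; simpl; lra.
  - intros [|i] j Hji; unfold covers in *; simpl.
    + replace j with 0%nat by lia; rewrite x0; lra.
    + pose proof (min_le j ltac:(lia)); pose proof (le_max j ltac:(lia)); lra.
Qed.

Lemma solution_covers_span (P : nat -> point) :
  is_solution alpha n x P -> covers_span alpha r (P n).
Proof.
  destruct good as (_ & _ & [[jmin [Hjmin xmin]] _] & [[jmax [Hjmax xmax]] _] & _).
  intros (_ & Ppos & Pcov); unfold covers_span; rewrite <- xmin, <- xmax.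
  split; [|split]; [apply Ppos | apply Pcov..]; lia.
Qed.

Lemma OPT_is_nearest_covers_span (Q : point) :
  covers_span alpha r Q ->
  (forall Q', covers_span alpha r Q' -> dist (0, 0) Q <= dist (0, 0) Q') ->
  OPT_is alpha n x (dist (0, 0) Q).
Proof.
  intros HQ nearest; split.
  - exists (jump Q); split; [now apply jump_is_solution|].
    apply cost_jump; [apply good | now intros [|i]].
  - intros P HP; pose proof (dist_le_cost P n) as Hcost.
    rewrite (proj1 HP) in Hcost.
    eapply Rle_trans; [apply nearest, solution_covers_span|]; eassumption.
Qed.

End Reduction.

Lemma dist_origin_le (Q Q' : point) :
  fst Q ^ 2 + snd Q ^ 2 <= fst Q' ^ 2 + snd Q' ^ 2 -> dist (0, 0) Q <= dist (0, 0) Q'.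
Proof.
  intros H; unfold dist; apply sqrt_le_1_alt; cbn [fst snd].
  rewrite !Rminus_0_l, <- !Rsqr_pow2, <- !Rsqr_neg, !Rsqr_pow2; exact H.
Qed.

Lemma threshold_le_iff (t r : R) :
  (t ^ 2 - 1) / (1 + t ^ 2) <= r <-> t ^ 2 * (1 - r) <= 1 + r.
Proof.
  assert (Hpos : 0 < 1 + t ^ 2) by nra.
  assert (E : (t ^ 2 - 1) / (1 + t ^ 2) * (1 + t ^ 2) = t ^ 2 - 1) by (field; lra).
  set (c := (t ^ 2 - 1) / (1 + t ^ 2)) in *; clearbody c; split; intros; nra.
Qed.

Lemma tan_le_1 (alpha : R) : 0 <= alpha <= PI / 4 -> tan alpha <= 1.
Proof.
  intros Ha; rewrite <- tan_PI4; pose proof PI_RGT_0.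
  apply tan_incr_1; lra.
Qed.

Section Wedge.

Variables alpha r : R.
Hypothesis tan_pos : 0 < tan alpha.
Hypothesis r_range : -1 <= r <= 1.

Local Notation T := (tan alpha).

Definition apex : point := ((r - 1) / 2, (1 + r) / (2 * T)).

Definition foot : point := (- 1 / (1 + T ^ 2), T / (1 + T ^ 2)).

Lemma apex_covers_span : covers_span alpha r apex.
Proof.
  unfold covers_span, covers, apex; cbn [fst snd].
  replace ((1 + r) / (2 * T) * T) with ((1 + r) / 2) by (field; lra).
  repeat split; try lra.
  apply Rmult_le_pos; [|apply Rlt_le, Rinv_0_lt_compat]; lra.
Qed.

(* Certificate: the constraints [v T - u >= 1] and [u + v T >= r] weighted by
   their KKT multipliers at the apex, [1 + r + T^2 (1 - r)] and
   [1 + r - T^2 (1 - r)] (the second is nonnegative exactly by hypothesis),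
   plus two squares. *)
Lemma apex_nearest (Q : point) :
  T ^ 2 * (1 - r) <= 1 + r -> covers_span alpha r Q -> dist (0, 0) apex <= dist (0, 0) Q.
Proof.
  destruct Q as [u v]; unfold covers_span, covers; cbn [fst snd].
  intros Hr (Hv & [Hleft _] & [_ Hright]); apply dist_origin_le; unfold apex; cbn [fst snd].
  assert (Hk : (1 + r) ^ 2 + T ^ 2 * (1 - r) ^ 2 <= 4 * T ^ 2 * (u ^ 2 + v ^ 2)).
  { assert (0 <= (v * T - 1 - u) * ((1 + r) + T ^ 2 * (1 - r))) by (apply Rmult_le_pos; nra).
    assert (0 <= (u + v * T - r) * ((1 + r) - T ^ 2 * (1 - r))) by (apply Rmult_le_pos; nra).
    assert (0 <= (2 * T * u - T * (r - 1)) ^ 2) by apply pow2_ge_0.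
    assert (0 <= (2 * T * v - (1 + r)) ^ 2) by apply pow2_ge_0.
    lra. }
  replace (((r - 1) / 2) ^ 2 + ((1 + r) / (2 * T)) ^ 2)
    with (((1 + r) ^ 2 + T ^ 2 * (1 - r) ^ 2) * / (4 * T ^ 2)) by (field; lra).
  apply Rmult_le_reg_r with (4 * T ^ 2); [nra|].
  rewrite Rmult_assoc, Rinv_l by nra; lra.
Qed.

Lemma dist_origin_apex :
  dist (0, 0) apex = / 2 * sqrt ((1 + r) ^ 2 * (/ T) ^ 2 + (1 - r) ^ 2).
Proof.
  unfold dist, apex; cbn [fst snd].
  rewrite <- (sqrt_pow2 (/ 2)), <- sqrt_mult_alt by lra.
  f_equal; field; lra.
Qed.

Lemma foot_covers_span : 1 + r <= T ^ 2 * (1 - r) -> covers_span alpha r foot.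
Proof.
  intros Hr; assert (Hpos : 0 < 1 + T ^ 2) by nra.
  unfold covers_span, covers, foot; cbn [fst snd].
  replace (T / (1 + T ^ 2) * T) with (T ^ 2 / (1 + T ^ 2)) by (field; lra).
  replace (- 1 / (1 + T ^ 2) - T ^ 2 / (1 + T ^ 2)) with (-1) by (field; lra).
  replace (- 1 / (1 + T ^ 2) + T ^ 2 / (1 + T ^ 2)) with ((T ^ 2 - 1) / (1 + T ^ 2)) by (field; lra).
  assert (r <= (T ^ 2 - 1) / (1 + T ^ 2)).
  { apply Rmult_le_reg_r with (1 + T ^ 2); [lra|].
    unfold Rdiv; rewrite Rmult_assoc, Rinv_l by lra; nra. }
  repeat split; try lra.
  apply Rlt_le, Rdiv_lt_0_compat; lra.
Qed.

(* Lagrange's identity [(u^2 + v^2)(1 + T^2) = (v T - u)^2 + (u T + v)^2]. *)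
Lemma foot_nearest (Q : point) :
  fst Q - snd Q * T <= -1 -> dist (0, 0) foot <= dist (0, 0) Q.
Proof.
  destruct Q as [u v]; cbn [fst snd]; intros Hleft.
  assert (Hpos : 0 < 1 + T ^ 2) by nra.
  apply dist_origin_le; unfold foot; cbn [fst snd].
  replace ((- 1 / (1 + T ^ 2)) ^ 2 + (T / (1 + T ^ 2)) ^ 2) with (/ (1 + T ^ 2)) by (field; lra).
  apply Rmult_le_reg_r with (1 + T ^ 2); [lra|].
  rewrite Rinv_l by lra.
  assert (0 <= (u * T + v) ^ 2) by apply pow2_ge_0.
  assert (1 <= (v * T - u) ^ 2) by nra.
  nra.
Qed.

Lemma dist_origin_foot : 0 < cos alpha -> dist (0, 0) foot = cos alpha.
Proof.
  intros Hcos; rewrite (Rtrigo_facts.cos_tan alpha Hcos), Rsqr_pow2.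
  assert (Hpos : 0 < 1 + T ^ 2) by nra.
  unfold dist, foot; cbn [fst snd].
  replace ((0 - - 1 / (1 + T ^ 2)) ^ 2 + (0 - T / (1 + T ^ 2)) ^ 2) with (/ (1 + T ^ 2))
    by (field; lra).
  rewrite sqrt_inv; field.
  apply Rgt_not_eq, sqrt_lt_R0; lra.
Qed.

End Wedge.

Theorem lemma2 (alpha : R) (n : nat) (x : nat -> R) (r : R) :
  0 < alpha < PI / 2 ->
  good_input_span n x r ->
  OPT_is alpha n x
    (if Rle_dec alpha (PI / 4) then
       / 2 * sqrt ((1 + r)^2 * (/ tan alpha)^2 + (1 - r)^2)
     else if Rle_dec ((tan alpha ^ 2 - 1) / (1 + tan alpha ^ 2)) r then
       / 2 * sqrt ((1 + r)^2 * (/ tan alpha)^2 + (1 - r)^2)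
     else cos alpha).
Proof.
  intros Ha good.
  assert (tan_pos : 0 < tan alpha) by (apply tan_gt_0; lra).
  pose proof good as (_ & _ & _ & _ & r_unit).
  assert (r_range : -1 <= r <= 1) by lra.
  assert (apex_case : tan alpha ^ 2 * (1 - r) <= 1 + r ->
            OPT_is alpha n x (/ 2 * sqrt ((1 + r)^2 * (/ tan alpha)^2 + (1 - r)^2))).
  { intros Hr; rewrite <- dist_origin_apex by assumption.
    apply (OPT_is_nearest_covers_span alpha n x r good); [now apply apex_covers_span |].
    intros Q; now apply apex_nearest. }
  destruct (Rle_dec alpha (PI / 4)) as [Hle | _].
  { apply apex_case; pose proof (tan_le_1 alpha ltac:(lra)).
    assert (tan alpha ^ 2 <= 1) by nra; nra. }
  destruct (Rle_dec _ r) as [Hth | Hth]; [now apply apex_case, threshold_le_iff|].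
  rewrite threshold_le_iff in Hth.
  rewrite <- (dist_origin_foot alpha) by (try apply cos_gt_0; lra).
  apply (OPT_is_nearest_covers_span alpha n x r good); [apply foot_covers_span; lra |].
  intros Q (_ & Hleft & _); now apply foot_nearest, Hleft.
Qed.
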